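(* Let $X$ be a compact metric space and $f_{1,\infty}=\{f_n\}$ an equicontinuous sequence of continuous maps $f_n:X\to X$, and let $\mu_{1,\infty}=\{\mu_n\}$ be a sequence of Borel probability measures on $X$ with $f_n\mu_n=\mu_{n+1}$ for all $n$. If the closure of $\{\mu_n\}$ with respect to the strong topology on the space of Borel probability measures is compact, then the Misiurewicz class $\mathcal{E}_{\mathrm{M}}$ contains all constant sequences $\mathcal{P}_n\equiv\mathcal{P}$, $\mathcal{P}$ a finite Borel partition of $X$.
   Context: The strong topology on Borel probability measures is the topology of setwise convergence: $\mu_\alpha\to\mu$ iff $\mu_\alpha(A)\to\mu(A)$ for every Borel set $A$. Equicontinuity: for every $\varepsilon>0$ there is $\delta>0$ with $\varrho(f_nx,f_ny)<\varepsilon$ whenever $\varrho(x,y)<\delta$, for all $n$. Misiurewicz class $\mathcal{E}_{\mathrm{M}}$ (for the system with $X_n=X$ and measures $\mu_n$): the set of sequences $\{\mathcal{P}_n\}$ of finite Borel partitions $\mathcal{P}_n=\{P_{n,1},\dots,P_{n,k_n}\}$ of $X$ with $\sup_nk_n<\infty$ such that for every $\varepsilon>0$ there exist $\delta>0$ and compact sets $C_{n,i}\subset P_{n,i}$ with, for all $n$: (a) $\mu_n(P_{n,i}\setminus C_{n,i})\le\varepsilon$; (b) $\varrho(x,y)\ge\delta$ for all $x\in C_{n,i}$, $y\in C_{n,j}$, $i\neq j$. *)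

From HB Require Import structures.
From mathcomp Require Import all_boot all_order all_algebra.
From mathcomp Require Import all_classical all_reals all_analysis.
Set Implicit Arguments. Unset Strict Implicit. Unset Printing Implicit Defensive.
Import Order.TTheory GRing.Theory Num.Theory.
Import numFieldNormedType.Exports.
Local Open Scope classical_set_scope.
Local Open Scope ring_scope.

(* A (nonempty) metric space: a metricType (distance [mdist], topology
   induced by the balls of [mdist]) with a distinguished point, needed to
   build the Borel measurable type. *)
#[short(type="pmetricType")]
HB.structure Definition PointedMetric (R : numDomainType) :=
  { M of Pointed M & Metric R M }.

Definition borel {R : realType} (X : pmetricType R) :=
  g_sigma_algebraType (@open X).

Definition borel_partition {R : realType} {X : pmetricType R} (k : nat)
  (P : 'I_k -> set X) : Prop :=
  (forall i, measurable (P i : set (borel X))) /\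
  (forall i j, i != j -> P i `&` P j = set0) /\
  (\bigcup_i P i = [set: X]).

Definition equicontinuous_seq {R : realType} {X : pmetricType R}
  (f : nat -> X -> X) : Prop :=
  forall eps : R, 0 < eps -> exists delta : R, 0 < delta /\
    forall n (x y : X), mdist x y < delta -> mdist (f n x) (f n y) < eps.

(* Strong (setwise) topology on Borel probability measures: it is the
   initial topology of the evaluations mu |-> mu(A), A Borel.  We realize it
   as the subspace topology of the image of the (Borel-restricted)
   evaluation map in the product (pointwise) topology on set X -> R. *)
Definition strong_embed {R : realType} {X : pmetricType R}
  (mu : probability (borel X) R) : {ptws set X -> R} :=
  fun A => if `[< measurable (A : set (borel X)) >] then fine (mu A) else 0.

(* The strong closure of {mu_n} (closure taken inside the space of Borel
   probability measures) is compact. *)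
Definition strong_closure_compact {R : realType} {X : pmetricType R}
  (mu : nat -> probability (borel X) R) : Prop :=
  compact (closure (range (strong_embed \o mu)) `&` range (@strong_embed R X)).

Definition misiurewicz_class {R : realType} {X : pmetricType R}
  (mu : nat -> probability (borel X) R)
  (k : nat -> nat) (P : forall n, 'I_(k n) -> set X) : Prop :=
  (forall n, borel_partition (P n)) /\
  (exists K, forall n, (k n <= K)%N) /\
  forall eps : R, 0 < eps -> exists delta : R, 0 < delta /\
    exists C : forall n, 'I_(k n) -> set X,
      forall n,
        (forall i, compact (C n i) /\ C n i `<=` P n i /\
           (mu n (P n i `\` C n i) <= eps%:E)%E) /\
        (forall i j, i != j -> forall x y, C n i x -> C n j y ->
           delta <= mdist x y).
Arguments misiurewicz_class {R X} mu k P.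

From HB Require Import structures.
From mathcomp Require Import all_boot all_order all_algebra.
From mathcomp Require Import all_classical all_reals all_analysis.
From mathcomp Require Import lra.
Import Order.TTheory GRing.Theory Num.Theory.
Import numFieldNormedType.Exports.
Local Open Scope classical_set_scope.
Local Open Scope ring_scope.

(* A Borel probability measure on a metric space is regular (every Borel set
   lies between a closed and an open set up to small measure), hence on a
   compact space inner regular by compact sets.  So for one measure lam each
   piece P_i contains a compact C_i with lam (P_i \ C_i) < eps; the C_i are
   disjoint compacts, hence delta-separated for some delta > 0.  The strict
   inequalities persist for all measures in a strong neighbourhood of lam, so
   finitely many such neighbourhoods cover the strongly compact closure of
   {mu_n}, and the smallest of their deltas serves every n. *)

Lemma nonincreasing_measure_lt {d} {T : measurableType d} {R : realType}
    (mu : {finite_measure set T -> \bar R}) {G : (set T) ^nat} {e : R} :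
  (forall n, measurable (G n)) -> nonincreasing_seq G ->
  \bigcap_n G n = set0 -> 0 < e -> exists N, (mu (G N) < e%:E)%E.
Proof.
move=> mG niG G0 e0.
have mG0 : (mu (G 0%N) < +oo)%E by rewrite ltey_eq fin_num_measure.
have := nonincreasing_cvg_mu mG0 mG (bigcapT_measurable mG) niG.
rewrite G0 measure0 => /(_ _ (open_ereal_lt' (_ : 0 < e%:E)%E)).
rewrite lte_fin => /(_ e0) [N _ HN].
by exists N; apply: HN => /=.
Qed.

Lemma measure_bigcup_partial_lt {d} {T : measurableType d} {R : realType}
    (mu : {finite_measure set T -> \bar R}) {F : (set T) ^nat} {e : R} :
  (forall n, measurable (F n)) -> 0 < e ->
  exists N, (mu (\bigcup_n F n `\` \bigcup_(i in `I_N) F i) < e%:E)%E.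
Proof.
move=> mF e0; pose D N := \bigcup_n F n `\` \bigcup_(i in `I_N) F i.
have mD N : measurable (D N).
  apply: measurableD; first exact: bigcupT_measurable.
  by apply: bigcup_measurable => i _.
have niD : nonincreasing_seq D.
  move=> m n mn; apply/subsetPset => x [Fx nFx]; split => // -[i /= im Fix].
  by apply: nFx; exists i => //=; exact: leq_trans im mn.
have D0 : \bigcap_N D N = set0.
  apply/seteqP; split => // x Dx; exfalso; have [[m _ Fx] _] := Dx 0%N I.
  by have [_] := Dx m.+1 I; apply; exists m => /=.
exact: nonincreasing_measure_lt mD niD D0 e0.
Qed.

Lemma measure_bigcup_le_geometric {d} {T : measurableType d} {R : realType}
    (mu : {measure set T -> \bar R}) {V : (set T) ^nat} {e : R} :
  0 <= e -> (forall n, measurable (V n)) ->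
  (forall n, (mu (V n) <= (e / (2 ^ n.+1)%:R)%:E)%E) ->
  (mu (\bigcup_n V n) <= e%:E)%E.
Proof.
move=> e0 mV muV.
have mVT : measurable (\bigcup_n V n) by exact: bigcupT_measurable.
apply: le_trans (measure_sigma_subadditive mu mV mVT (@subset_refl _ _)) _.
by apply: le_trans (epsilon_trick0 xpredT e0); exact: lee_nneseries.
Qed.

Section borel_regularity.
Context {R : realType} {X : pmetricType R}.

Lemma open_measurable_borel (U : set X) : open U -> measurable (U : set (borel X)).
Proof. exact: sub_sigma_algebra. Qed.

Lemma closed_measurable_borel (F : set X) :
  closed F -> measurable (F : set (borel X)).
Proof.
move=> cF; rewrite -[F]setCK; apply: measurableC.
by apply: open_measurable_borel; rewrite openC.
Qed.

Lemma open_setD_closed_measurable_borel (U F : set X) :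
  open U -> closed F -> measurable (U `\` F : set (borel X)).
Proof.
move=> oU cF; apply: measurableD.
  exact: open_measurable_borel.
exact: closed_measurable_borel.
Qed.

Lemma compact_measurable_borel (C : set X) :
  compact C -> measurable (C : set (borel X)).
Proof.
by move=> /(compact_closed (@metric_hausdorff _ X)) /closed_measurable_borel.
Qed.

Variable mu : {finite_measure set borel X -> \bar R}.

Definition mu_regular (A : set X) := forall e : R, 0 < e -> exists F U : set X,
  [/\ closed F, open U, F `<=` A, A `<=` U & (mu (U `\` F) < e%:E)%E].

Lemma open_mu_regular (U : set X) : open U -> mu_regular U.
Proof.
move=> oU e e0.
pose F N := closure [set x : X | ball x N.+1%:R^-1 `<=` U].
have FU N : F N `<=` U.
  move=> y /(_ (ball y N.+1%:R^-1)) [|x [Sx /ball_sym]]; last exact: Sx.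
  exact: nbhsx_ballx.
have cF N : closed (F N) by exact: closed_closure.
pose G N := U `\` F N.
have mG N : measurable (G N : set (borel X)).
  exact: open_setD_closed_measurable_borel.
have niG : nonincreasing_seq G.
  move=> m n mn; apply/subsetPset => x [Ux nFx]; split => // Fx; apply: nFx.
  apply: closureS Fx => w Sw z bz; apply: Sw; apply: le_ball bz.
  by rewrite lef_pV2 ?posrE ?ltr0n ?ler_nat ?ltnS.
have G0 : \bigcap_N G N = set0.
  apply/seteqP; split => // x Gx; have [Ux _] := Gx 0%N I.
  have /nbhs_ballP[r r0 rU] : nbhs x U by exact: open_nbhs_nbhs.
  have [_] := Gx (Num.truncn r^-1) I; apply; apply: subset_closure => z bz.
  apply/rU/(le_ball _ bz)/ltW.
  by rewrite invf_plt ?posrE ?ltr0n//; exact: truncnS_gt.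
have [N muG] := nonincreasing_measure_lt mu mG niG G0 e0.
by exists (F N), U; split => //; exact: FU.
Qed.

Lemma mu_regularC (A : set X) : mu_regular A -> mu_regular (~` A).
Proof.
move=> rA e /rA[F [U [cF oU FA AU muUF]]]; exists (~` U), (~` F); split.
- by rewrite closedC.
- by rewrite openC.
- exact: subsetC.
- exact: subsetC.
- by rewrite setDE setCK setIC -setDE.
Qed.

Lemma mu_regular_bigcup (A : (set X) ^nat) :
  (forall n, mu_regular (A n)) -> mu_regular (\bigcup_n A n).
Proof.
move=> rA e e0; have e20 : 0 < e / 2 by rewrite divr_gt0.
pose e_ n := e / 2 / (2 ^ n.+1)%:R.
have /choice[p hp] n : exists p : set X * set X, [/\ closed p.1, open p.2,
    p.1 `<=` A n, A n `<=` p.2 & (mu (p.2 `\` p.1) < (e_ n)%:E)%E].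
  have [|F [U ?]] := rA n (e_ n); last by exists (F, U).
  by rewrite divr_gt0 // ltr0n expn_gt0.
pose F n := (p n).1; pose U n := (p n).2.
have cF n : closed (F n) by case: (hp n).
have oU n : open (U n) by case: (hp n).
have FA n : F n `<=` A n by case: (hp n).
have AU n : A n `<=` U n by case: (hp n).
have mF n : measurable (F n : set (borel X)) by exact: closed_measurable_borel.
pose F_ N := \bigcup_(i in `I_N) F i.
have cF_ N : closed (F_ N) by apply: closed_bigcup => //; exact: finite_II.
pose D N := \bigcup_n F n `\` F_ N.
have mD N : measurable (D N : set (borel X)).
  by apply: measurableD; [exact: bigcupT_measurable | exact: closed_measurable_borel].
have [N muD] := measure_bigcup_partial_lt mu mF e20.
exists (F_ N), (\bigcup_n U n); split.
- exact: cF_.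
- exact: bigcup_open.
- by move=> x [i _ /FA Ax]; exists i.
- by move=> x [i _ /AU Ux]; exists i.
pose V n := U n `\` F n.
have mV n : measurable (V n : set (borel X)).
  exact: open_setD_closed_measurable_borel.
have mV_ : measurable (\bigcup_n V n : set (borel X)) by exact: bigcupT_measurable.
have mVD : measurable (\bigcup_n V n `|` D N : set (borel X)) by exact: measurableU.
have mUF : measurable (\bigcup_n U n `\` F_ N : set (borel X)).
  by apply: open_setD_closed_measurable_borel => //; exact: bigcup_open.
have UF_VD : \bigcup_n U n `\` F_ N `<=` \bigcup_n V n `|` D N.
  move=> x [[m _ Ux] nFx]; have [Fx|nFx'] := pselect (F m x).
    by right; split => //; exists m.
  by left; exists m.
have muV : (mu (\bigcup_n V n) <= (e / 2)%:E)%E.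
  apply: measure_bigcup_le_geometric (ltW e20) mV _ => n.
  by case: (hp n) => _ _ _ _ /ltW.
apply: le_lt_trans (le_measure mu (mem_set mUF) (mem_set mVD) UF_VD) _.
apply: le_lt_trans (measureU2 mu mV_ (mD N)) _.
by rewrite [e in (_ < e%:E)%E](splitr e) EFinD lee_ltD ?fin_num_measure.
Qed.

Lemma mu_regular_sigma_algebra : sigma_algebra setT mu_regular.
Proof.
split; last exact: mu_regular_bigcup.
- by apply: open_mu_regular; exact: open0.
- by move=> A rA; rewrite setTD; exact: mu_regularC.
Qed.

Lemma measurable_mu_regular (A : set X) :
  measurable (A : set (borel X)) -> mu_regular A.
Proof.
move=> mA; apply: (smallest_sub mu_regular_sigma_algebra _ mA).
exact: open_mu_regular.
Qed.

Lemma compact_inner_regular (A : set X) (e : R) : compact [set: X] ->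
  measurable (A : set (borel X)) -> 0 < e ->
  exists C, [/\ compact C, C `<=` A & (mu (A `\` C) < e%:E)%E].
Proof.
move=> cX mA /(measurable_mu_regular _ mA)[F [U [cF oU FA AU muUF]]].
exists F; split => //; first exact: subclosed_compact cX _.
apply: le_lt_trans muUF; apply: le_measure; rewrite ?inE.
- by apply: measurableD => //; exact: closed_measurable_borel.
- exact: open_setD_closed_measurable_borel.
- by move=> x [Ax nFx]; split => //; exact: AU.
Qed.

End borel_regularity.

Lemma compact_closed_separated {R : realType} {X : pmetricType R} {A B : set X} :
  compact A -> closed B -> A `&` B = set0 ->
  \forall d \near 0^'+, forall x y, A x -> B y -> d <= mdist x y.
Proof.
move=> cA cB AB0.
suff : \forall d \near 0^'+, A `<=` [set x | forall y, B y -> d <= mdist x y].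
  by apply: filterS => d Ad x y /Ad; exact.
apply: (proj1 (compact_near_coveringP A) cA) => x Ax.
have /nbhs_ballP[r r0 rB] : nbhs x (~` B).
  apply: open_nbhs_nbhs; split; first by rewrite openC.
  by move=> Bx; rewrite -[False]/(set0 x) -AB0.
near=> x' d => y By.
have rxy : r <= mdist x y.
  by rewrite leNgt; apply/negP => rxy; apply: (rB y) => //; rewrite ballEmdist.
have xx' : mdist x x' < r / 2.
  near: x'; apply/nbhs_ballP; exists (r / 2); first exact: divr_gt0.
  by move=> z; rewrite ballEmdist.
have dr : d <= r / 2 by near: d; apply: nbhs_right_le; rewrite divr_gt0.
have := metric_triangle x x' y; rewrite /=; lra.
Unshelve. all: end_near. Qed.

Lemma compact_family_separated {R : realType} {X : pmetricType R} (k : nat)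
    (C : 'I_k -> set X) :
  (forall i, compact (C i)) -> (forall i j, i != j -> C i `&` C j = set0) ->
  \forall d \near 0^'+, forall i j, i != j ->
    forall x y, C i x -> C j y -> d <= mdist x y.
Proof.
move=> cC dC; apply: filter_forall => i; apply: filter_forall => j.
have [->|ij] := eqVneq i j; first by apply: nearW => d /eqP.
have cCj : closed (C j) by exact: compact_closed (@metric_hausdorff _ X) (cC j).
have := compact_closed_separated (cC i) cCj (dC i j ij).
by apply: filterS => d dsep _.
Qed.

Lemma ptws_eval_lt_near (T : eqType) (R : realType) (g : {ptws T -> R})
    (t : T) (e : R) :
  g t < e -> \forall g' \near g, g' t < e.
Proof.
move=> gte; have := @proj_continuous T (fun=> R) t g.
move=> /(_ [set r | r < e]); apply.
by apply: open_nbhs_nbhs; split => //; exact: open_lt.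
Qed.

Lemma strong_embed_measurable {R : realType} {X : pmetricType R}
    (lam : probability (borel X) R) (A : set X) :
  measurable (A : set (borel X)) -> strong_embed lam A = fine (lam A).
Proof. by move=> mA; rewrite /strong_embed asboolT. Qed.

Lemma strong_embed_lt {R : realType} {X : pmetricType R}
    (lam : probability (borel X) R) (A : set X) (e : R) :
  measurable (A : set (borel X)) ->
  (strong_embed lam A < e) = (lam A < e%:E)%E.
Proof.
by move=> mA; rewrite strong_embed_measurable // -lte_fin fineK ?fin_num_measure.
Qed.

Section constant_partition.
Context {R : realType} {X : pmetricType R} {k : nat} (P : 'I_k -> set X).
Hypothesis compactX : compact [set: X].
Hypothesis partitionP : borel_partition P.

Definition misiurewicz_witness (eps d : R) (g : {ptws set X -> R}) :=
  exists C : 'I_k -> set X,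
    (forall i, [/\ compact (C i), C i `<=` P i & g (P i `\` C i) < eps]) /\
    (forall i j, i != j -> forall x y, C i x -> C j y -> d <= mdist x y).

Lemma measurable_partition_diff_compact (i : 'I_k) {C : set X} :
  compact C -> measurable (P i `\` C : set (borel X)).
Proof.
by move=> /compact_measurable_borel mC; apply: measurableD => //; case: partitionP.
Qed.

Lemma misiurewicz_witness_near (eps : R) (lam : probability (borel X) R) :
  0 < eps -> \forall g \near (strong_embed lam : {ptws set X -> R}) & d \near 0^'+,
    misiurewicz_witness eps d g.
Proof.
move=> eps0; have [mP [disjP _]] := partitionP.
have /choice[C hC] i : exists C,
    [/\ compact C, C `<=` P i & (lam (P i `\` C) < eps%:E)%E].
  exact: compact_inner_regular compactX (mP i) eps0.
have cC i : compact (C i) by case: (hC i).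
have CP i : C i `<=` P i by case: (hC i).
have disjC i j : i != j -> C i `&` C j = set0.
  by move=> ij; apply/seteqP; split => //; rewrite -(disjP i j ij); exact: setISS.
have lam_lt i : strong_embed lam (P i `\` C i) < eps.
  rewrite strong_embed_lt; first by case: (hC i).
  exact: measurable_partition_diff_compact.
near=> g d.
have g_lt : forall i, g (P i `\` C i) < eps.
  by near: g; apply: filter_forall => i; exact: ptws_eval_lt_near.
exists C; split => [i|/=]; first by split.
by near: d; exact: compact_family_separated.
Unshelve. all: end_near. Qed.

Lemma compact_misiurewicz_witness {eps : R} {K : set {ptws set X -> R}} :
  0 < eps -> compact K -> K `<=` range (@strong_embed R X) ->
  \forall d \near 0^'+, K `<=` misiurewicz_witness eps d.
Proof.
move=> eps0 cK Kemb; apply: (proj1 (compact_near_coveringP K) cK).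
by move=> g /Kemb[lam _ <-]; exact: misiurewicz_witness_near.
Qed.

End constant_partition.

Theorem mainTheorem16 (R : realType) (X : pmetricType R)
  (f : nat -> X -> X) (mu : nat -> probability (borel X) R) :
  compact [set: X] ->
  (forall n, continuous (f n)) ->
  equicontinuous_seq f ->
  (forall n (A : set (borel X)), measurable A ->
     mu n.+1 A = mu n (f n @^-1` A)) ->
  strong_closure_compact mu ->
  forall (k : nat) (P : 'I_k -> set X), borel_partition P ->
    misiurewicz_class mu (fun _ => k) (fun _ => P).
Proof.
move=> cX _ _ _ cK k P hP; split => //; split; first by exists k.
move=> eps eps0.
have := compact_misiurewicz_witness _ cX hP eps0 cK (@subIsetr _ _ _).
move=> /(filterI (nbhs_right_gt 0)) /filter_ex[d [d0 Kd]].
exists d; split => //.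
have /choice[C hC] n : misiurewicz_witness P eps d (strong_embed (mu n)).
  by apply: Kd; split; [apply: subset_closure; exists n | exists (mu n)].
exists C => n; have [hCn sepC] := hC n; split => // i.
have [cC CP lt_eps] := hCn i; do 2!split => //.
move: lt_eps; rewrite strong_embed_lt => [/ltW //|].
exact: measurable_partition_diff_compact.
Qed.
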